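(* Consider the finite game with players $\mathcal{M}=\{1,\dots,M\}$, common action set $\mathcal{N}$ and tolled costs $\bar c_i(\mathbf{a})=\sum_{l\in\mathcal{M}_{a_i}(\mathbf{a})}\frac{\sigma^2}{h_{la_i}}\frac{\beta_l}{[1-S_i(\mathbf{a})]^+}-\sum_{l\in\mathcal{M}_{a_i}(\mathbf{a})\setminus\{i\}}\frac{\sigma^2}{h_{la_i}}\frac{\beta_l}{[1-S_i(\mathbf{a})+\beta_i]^+}$, where $S_i(\mathbf{a})=\sum_{k\in\mathcal{M}_{a_i}(\mathbf{a})}\beta_k$, and suppose $h_{ij}=h_j$ and $\beta_i=\beta$ for all $i\in\mathcal{M}$, $j\in\mathcal{N}$. Then every Nash equilibrium of this game is system optimal, i.e., minimizes $C(\mathbf{a})=\sum_{i\in\mathcal{M}}\frac{\sigma^2}{h_{ia_i}}\frac{\beta_i}{[1-S_i(\mathbf{a})]^+}$ over all $\mathbf{a}\in\mathcal{N}^M$.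
   Context: Uplink cellular model: mobiles $\mathcal{M}=\{1,\dots,M\}$, BSs $\mathcal{N}=\{1,\dots,N\}$, power gains $h_{ij}>0$, noise power $\sigma^2>0$, target SINRs $\gamma_i>0$, $\beta_i=\gamma_i/(1+\gamma_i)$. Association profile $\mathbf{a}\in\mathcal{N}^M$, $\mathcal{M}_j(\mathbf{a})=\{l: a_l=j\}$, $[x]^+=\max(x,0)$, positive$/0=+\infty$, and $\bar c_i(\mathbf{a})=+\infty$ whenever its first sum is infinite. $(b,\mathbf{a}_{-i})$ replaces $a_i$ by $b$. $\mathbf{a}$ is a Nash equilibrium if $a_i\in\arg\min_{b\in\mathcal{N}}\bar c_i(b,\mathbf{a}_{-i})$ for all $i$. Standing assumption: there exists at least one feasible association, i.e. some $\mathbf{a}$ with $\sum_{l\in\mathcal{M}_j(\mathbf{a})}\beta_l<1$ for all $j$. *)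

From HB Require Import structures.
From mathcomp Require Import all_boot all_order all_algebra.
From mathcomp Require Import constructive_ereal.
Set Implicit Arguments. Unset Strict Implicit. Unset Printing Implicit Defensive.
Import Order.TTheory GRing.Theory Num.Theory.
Local Open Scope ring_scope.

Section Uplink.
Variables (R : realFieldType) (M N : nat).

Definition ppart (x : R) : R := Num.max x 0.

(* x / [d]^+ with the convention positive/0 = +oo (here [d]^+ >= 0 always;
   all numerators used below are positive). *)
Definition pdiv (x d : R) : \bar R :=
  if 0 < ppart d then (x / ppart d)%:E
  else if 0 < x then +oo%E else 0%E.

Definition beta (gamma : 'I_M -> R) (i : 'I_M) : R := gamma i / (1 + gamma i).

Definition upd (a : 'I_M -> 'I_N) (i : 'I_M) (b : 'I_N) : 'I_M -> 'I_N :=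
  fun k => if k == i then b else a k.

Definition Sload (gamma : 'I_M -> R) (a : 'I_M -> 'I_N) (i : 'I_M) : R :=
  \sum_(k | a k == a i) beta gamma k.

Definition cfirst (h : 'I_M -> 'I_N -> R) (sigma2 : R) (gamma : 'I_M -> R)
  (a : 'I_M -> 'I_N) (i : 'I_M) : \bar R :=
  (\sum_(l | a l == a i)
     pdiv (sigma2 / h l (a i) * beta gamma l) (1 - Sload gamma a i))%E.

Definition csecond (h : 'I_M -> 'I_N -> R) (sigma2 : R) (gamma : 'I_M -> R)
  (a : 'I_M -> 'I_N) (i : 'I_M) : \bar R :=
  (\sum_(l | (a l == a i) && (l != i))
     pdiv (sigma2 / h l (a i) * beta gamma l)
          (1 - Sload gamma a i + beta gamma i))%E.

Definition cbar (h : 'I_M -> 'I_N -> R) (sigma2 : R) (gamma : 'I_M -> R)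
  (a : 'I_M -> 'I_N) (i : 'I_M) : \bar R :=
  if cfirst h sigma2 gamma a i == +oo%E then +oo%E
  else (cfirst h sigma2 gamma a i - csecond h sigma2 gamma a i)%E.

Definition Csys (h : 'I_M -> 'I_N -> R) (sigma2 : R) (gamma : 'I_M -> R)
  (a : 'I_M -> 'I_N) : \bar R :=
  (\sum_(i < M) pdiv (sigma2 / h i (a i) * beta gamma i) (1 - Sload gamma a i))%E.

Definition is_NE (h : 'I_M -> 'I_N -> R) (sigma2 : R) (gamma : 'I_M -> R)
  (a : 'I_M -> 'I_N) : Prop :=
  forall (i : 'I_M) (b : 'I_N),
    (cbar h sigma2 gamma a i <= cbar h sigma2 gamma (upd a i b) i)%E.

Definition feasible (gamma : 'I_M -> R) (a : 'I_M -> 'I_N) : Prop :=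
  forall j : 'I_N, \sum_(l | a l == j) beta gamma l < 1.

End Uplink.

(* With common gains and targets, a cell j carrying n users contributes
   F_j(n) = n c_j / (1 - n beta) to the social cost, and the toll makes a user's
   cost exactly its marginal contribution F_j(n) - F_j(n-1): the game is a
   congestion game whose potential is the social cost.  These marginal costs
   increase with n, so each F_j is discretely convex.  At an equilibrium no cell
   is overloaded, and since no user gains by moving, some threshold lam bounds
   the marginal costs of the occupied cells from above and those of adding a
   user to any cell from below.  Convexity gives
   F_j(n'_j) - F_j(n_j) >= lam (n'_j - n_j) for every cell, and summing over
   the cells, where both profiles place M users, yields C(a') >= C(a). *)

From Pilot Require Import Defs.
From HB Require Import structures.
From mathcomp Require Import all_boot all_order all_algebra.
From mathcomp Require Import constructive_ereal.
From mathcomp Require Import ring lra.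
Set Implicit Arguments. Unset Strict Implicit. Unset Printing Implicit Defensive.
Import Order.TTheory GRing.Theory Num.Theory.
Local Open Scope ring_scope.

Lemma discrete_supporting_line (R : numDomainType) (f : nat -> R) (lam : R) m n :
  (forall k, (m <= k < n)%N -> f k.+1 - f k <= lam) ->
  (forall k, (n <= k < m)%N -> lam <= f k.+1 - f k) ->
  (m%:R - n%:R) * lam <= f m - f n.
Proof.
case: (leqP n m) => [nm _ up | /ltnW mn low _].
  rewrite -natrB // -telescope_sumr // mulr_natl -sumr_const_nat.
  exact: ler_sum_nat.
rewrite -[_ - n%:R]opprB -[f m - _]opprB mulNr lerN2 -natrB //.
rewrite -telescope_sumr // mulr_natl -sumr_const_nat; exact: ler_sum_nat.
Qed.

Section CellCost.
Variables (R : realFieldType) (b c : R).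
Hypotheses (b_gt0 : 0 < b) (c_gt0 : 0 < c).

(* A cell shared by [n] users with [beta = b] and [sigma2 * beta / h = c]:
   each user needs power [c / slack n], [cell_cost n] is the total power of
   the cell and [marginal_cost n] the increase caused by its [n]-th user. *)
Definition slack (n : nat) : R := 1 - n%:R * b.
Definition cell_cost (n : nat) : R := n%:R * (c / slack n).
Definition marginal_cost (n : nat) : R := c / (slack n * (slack n + b)).

Lemma slack_le m n : (m <= n)%N -> slack n <= slack m.
Proof. by move=> mn; rewrite lerD2l lerN2 ler_pM2r // ler_nat. Qed.

Lemma slack0 : slack 0 = 1.
Proof. by rewrite /slack mul0r subr0. Qed.

Lemma slackS n : slack n = slack n.+1 + b.
Proof. by rewrite /slack -addn1 natrD; ring. Qed.

Lemma slack_gt0_ltn m n : 0 < slack m -> slack n <= 0 -> (m < n)%N.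
Proof.
move=> sm sn; rewrite -(ltr_nat R) -(ltr_pM2r b_gt0).
by move: sm sn; rewrite /slack; lra.
Qed.

Lemma marginal_cost_le m n : (m <= n)%N -> 0 < slack n ->
  marginal_cost m <= marginal_cost n.
Proof.
move=> mn; have := slack_le mn; rewrite /marginal_cost.
move: (slack m) (slack n) => sm sn snm sn0.
have sm0 := lt_le_trans sn0 snm.
have prod_le : sn * (sn + b) <= sm * (sm + b).
  by apply: ler_pM; rewrite ?lerD2r // ltW // addr_gt0.
by rewrite ler_pM2l // lef_pV2 // posrE mulr_gt0 // addr_gt0.
Qed.

Lemma cell_costS n : 0 < slack n.+1 ->
  cell_cost n.+1 - cell_cost n = marginal_cost n.+1.
Proof.
move=> sn; rewrite /cell_cost /marginal_cost (slackS n).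
have -> : (n%:R : R) = n.+1%:R - 1 by rewrite -addn1 natrD addrK.
have : n.+1%:R * b + slack n.+1 - 1 = 0 by rewrite /slack; ring.
move: sn; set x := n.+1%:R; set s := slack n.+1 => sn xs.
apply/eqP; rewrite -subr_eq0 -(mulr0 (c / (s * (s + b)))) -xs; apply/eqP.
by field; rewrite !gt_eqF // addr_gt0.
Qed.

Lemma cell_cost_supporting_line n m (lam : R) : 0 < slack n -> 0 < slack m ->
  ((0 < n)%N -> marginal_cost n <= lam) ->
  (0 < slack n.+1 -> lam <= marginal_cost n.+1) ->
  (m%:R - n%:R) * lam <= cell_cost m - cell_cost n.
Proof.
move=> sn sm le_lam lam_le; apply: discrete_supporting_line => k /andP [lo hi].
  rewrite cell_costS; last exact: lt_le_trans sn (slack_le hi).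
  exact: le_trans (marginal_cost_le hi sn) (le_lam (leq_ltn_trans (leq0n k) hi)).
have sk : 0 < slack k.+1 by exact: lt_le_trans sm (slack_le hi).
rewrite cell_costS //; apply: le_trans _ (@marginal_cost_le n.+1 k.+1 lo sk).
exact/lam_le/(lt_le_trans sk)/slack_le.
Qed.
End CellCost.

Section PositiveDivision.
Variable R : realFieldType.

Lemma pdivE (x d : R) : 0 < d -> Defs.pdiv x d = (x / d)%:E.
Proof. by move=> d_gt0; rewrite /Defs.pdiv /ppart max_l ?ltW // d_gt0. Qed.

Lemma pdiv_infty (x d : R) : d <= 0 -> 0 < x -> Defs.pdiv x d = +oo%E.
Proof. by move=> d_le0 x_gt0; rewrite /Defs.pdiv /ppart max_r // ltxx x_gt0. Qed.

Lemma pdiv_ge0 (x d : R) : 0 < x -> (0 <= Defs.pdiv x d)%E.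
Proof.
move=> x_gt0; rewrite /Defs.pdiv; case: ifP => [d_gt0|_]; last by rewrite x_gt0 leey.
by rewrite lee_fin ltW // divr_gt0.
Qed.

Lemma esum_pdiv_infty (I : finType) (P : pred I) (x d : I -> R) (i : I) :
  (forall l, 0 < x l) -> P i -> d i <= 0 ->
  (\sum_(l | P l) Defs.pdiv (x l) (d l))%E = +oo%E.
Proof.
move=> x_gt0 Pi di_le0; apply/esum_eqyP.
  by move=> l _; rewrite gt_eqF // (lt_le_trans _ (pdiv_ge0 _ (x_gt0 l))) ?ltNy0.
by exists i; rewrite mem_index_enum Pi pdiv_infty.
Qed.
End PositiveDivision.

Definition load (M N : nat) (b : 'I_M -> 'I_N) (j : 'I_N) : nat :=
  #|[pred l | b l == j]|.

Lemma sum_load_const (V : nmodType) (M N : nat) (x : V) (b : 'I_M -> 'I_N) j :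
  \sum_(l | b l == j) x = x *+ load b j.
Proof. exact: sumr_const. Qed.

Lemma sum_load (M N : nat) (b : 'I_M -> 'I_N) : (\sum_j load b j)%N = M.
Proof.
rewrite -[RHS]card_ord -sum1_card (partition_big b predT) //.
by apply: eq_bigr => j _; rewrite sum1_card.
Qed.

Lemma load_gt0 (M N : nat) (b : 'I_M -> 'I_N) i : (0 < load b (b i))%N.
Proof. by apply/card_gt0P; exists i; rewrite inE /=. Qed.

Lemma load_gt0P (M N : nat) (b : 'I_M -> 'I_N) j :
  (0 < load b j)%N -> exists i, b i = j.
Proof. by case/card_gt0P => i; rewrite inE => /eqP; exists i. Qed.

Lemma load_upd (M N : nat) (b : 'I_M -> 'I_N) i k :
  k != b i -> load (upd b i k) k = (load b k).+1.
Proof.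
move=> k_new; rewrite /load (cardD1 i) [in RHS](cardD1 i) !inE /= /upd eqxx.
rewrite eqxx eq_sym (negbTE k_new) add1n add0n; congr _.+1.
by apply: eq_card => l; rewrite !inE; case: eqP.
Qed.

Section SymmetricGame.
Variables (R : realFieldType) (M N : nat) (h : 'I_M -> 'I_N -> R) (sigma2 : R)
  (gamma : 'I_M -> R) (i0 : 'I_M).
Hypotheses (h_gt0 : forall i j, 0 < h i j) (sigma2_gt0 : 0 < sigma2)
  (gamma_gt0 : forall i, 0 < gamma i) (h_indep : forall i k j, h i j = h k j)
  (gamma_const : forall i k, gamma i = gamma k).

Implicit Types (b : 'I_M -> 'I_N) (i l : 'I_M) (j k : 'I_N).

Let beta0 := beta gamma i0.
Let scale (j : 'I_N) : R := sigma2 / h i0 j * beta0.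

Lemma beta_const l : beta gamma l = beta0.
Proof. by rewrite /beta (gamma_const l i0). Qed.

Lemma beta0_gt0 : 0 < beta0.
Proof. by rewrite divr_gt0 // addr_gt0. Qed.

Lemma scale_gt0 j : 0 < scale j.
Proof. by apply: mulr_gt0; [exact: divr_gt0 | exact: beta0_gt0]. Qed.

Lemma user_scale l j : sigma2 / h l j * beta gamma l = scale j.
Proof. by rewrite (h_indep l i0) beta_const. Qed.

Lemma sum_beta b j : \sum_(l | b l == j) beta gamma l = (load b j)%:R * beta0.
Proof.
rewrite (eq_bigr (fun=> beta0)) ?sum_load_const ?mulr_natl // => l _.
exact: beta_const.
Qed.

Lemma Sload_slack b i : 1 - Sload gamma b i = slack beta0 (load b (b i)).
Proof. by rewrite /Sload sum_beta. Qed.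

Lemma feasible_slack b : feasible gamma b -> forall j, 0 < slack beta0 (load b j).
Proof. by move=> b_feas j; rewrite subr_gt0 -sum_beta. Qed.

Lemma cbar_overload b i : slack beta0 (load b (b i)) <= 0 ->
  cbar h sigma2 gamma b i = +oo%E.
Proof.
move=> s_le0; rewrite /cbar /cfirst.
under eq_bigr do rewrite user_scale Sload_slack.
rewrite (@esum_pdiv_infty _ _ (fun l => b l == b i) (fun=> scale (b i))
  (fun=> slack beta0 (load b (b i))) i) ?eqxx //.
by move=> l; exact: scale_gt0.
Qed.

Lemma cbar_marginal b i : 0 < slack beta0 (load b (b i)) ->
  cbar h sigma2 gamma b i = (marginal_cost beta0 (scale (b i)) (load b (b i)))%:E.
Proof.
move=> s_gt0.
have sb_gt0 : 0 < slack beta0 (load b (b i)) + beta0 by rewrite addr_gt0 ?beta0_gt0.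
rewrite /cbar /cfirst /csecond.
under eq_bigr do rewrite user_scale Sload_slack pdivE //.
under [X in (_ - X)%E]eq_bigr do rewrite user_scale beta_const Sload_slack pdivE //.
rewrite !sumEFin /= -EFinB; congr _%:E.
set y := scale (b i) / (_ + beta0).
have -> : \sum_(l | (b l == b i) && (l != i)) y = y *+ load b (b i) - y.
  by rewrite -sum_load_const [in RHS](bigD1 i) //= addrC addrK.
rewrite sum_load_const {}/y; move: s_gt0 sb_gt0 (load_gt0 b i).
case: (load b (b i)) => // n s_gt0 _ _.
rewrite -cell_costS ?beta0_gt0 ?scale_gt0 // /cell_cost (slackS beta0 n).
move: (scale (b i) / _) (scale (b i) / (_ + beta0)) => x y; ring.
Qed.

Lemma Csys_cell b : (forall j, 0 < slack beta0 (load b j)) ->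
  Csys h sigma2 gamma b = (\sum_j cell_cost beta0 (scale j) (load b j))%:E.
Proof.
move=> s_gt0; rewrite /Csys.
under eq_bigr do rewrite user_scale Sload_slack pdivE ?s_gt0 //.
rewrite sumEFin (partition_big b predT) //=; congr _%:E; apply: eq_bigr => j _.
rewrite (eq_bigr (fun=> scale j / slack beta0 (load b j))) => [|l /eqP-> //].
by rewrite sum_load_const /cell_cost mulr_natl.
Qed.

Lemma overload_load_gt0 b j : slack beta0 (load b j) <= 0 -> (0 < load b j)%N.
Proof. by apply: slack_gt0_ltn; rewrite ?beta0_gt0 // slack0. Qed.

Lemma Csys_overload b j : slack beta0 (load b j) <= 0 ->
  Csys h sigma2 gamma b = +oo%E.
Proof.
move=> s_le0; have [i bij] := load_gt0P (overload_load_gt0 s_le0).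
rewrite /Csys; under eq_bigr do rewrite user_scale Sload_slack.
apply: (@esum_pdiv_infty _ _ predT (fun l => scale (b l))
  (fun l => slack beta0 (load b (b l))) i) => //=; last by rewrite bij.
by move=> l; exact: scale_gt0.
Qed.

Section Equilibrium.
Variable a : 'I_M -> 'I_N.
Hypotheses (feas : exists a0 : 'I_M -> 'I_N, feasible gamma a0)
  (a_NE : is_NE h sigma2 gamma a).

Lemma NE_feasible j : 0 < slack beta0 (load a j).
Proof.
(* An overloaded cell forces every other cell to be full, leaving too little
   room for the users of the feasible profile [a0]. *)
rewrite ltNge; apply/negP => overload.
have [i aij] := load_gt0P (overload_load_gt0 overload).
have others_full k : k != j -> slack beta0 (load a k).+1 <= 0.
  move=> k_new; rewrite leNgt; apply/negP => s_gt0.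
  have := a_NE i k; rewrite cbar_overload ?aij // cbar_marginal.
    by rewrite leye_eq.
  by rewrite /upd eqxx load_upd ?aij.
have [a0 /feasible_slack a0_feas] := feas.
suff : (\sum_k load a0 k < \sum_k load a k)%N by rewrite !sum_load ltnn.
rewrite (bigD1 j) //= [ltnRHS](bigD1 j) //= -addSn leq_add //.
  exact: (slack_gt0_ltn beta0_gt0 (a0_feas j) overload).
apply: leq_sum => k k_new; rewrite -ltnS.
exact: (slack_gt0_ltn beta0_gt0 (a0_feas k) (others_full k k_new)).
Qed.

Lemma NE_marginal i k : k != a i -> 0 < slack beta0 (load a k).+1 ->
  marginal_cost beta0 (scale (a i)) (load a (a i))
    <= marginal_cost beta0 (scale k) (load a k).+1.
Proof.
move=> k_new s_gt0; have := a_NE i k.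
by rewrite cbar_marginal ?NE_feasible // cbar_marginal /upd eqxx load_upd.
Qed.

Lemma NE_threshold : exists lam,
  (forall j, (0 < load a j)%N -> marginal_cost beta0 (scale j) (load a j) <= lam) /\
  (forall k, 0 < slack beta0 (load a k).+1 ->
     lam <= marginal_cost beta0 (scale k) (load a k).+1).
Proof.
have [js js_used js_max] := @arg_maxP _ _ 'I_N (a i0) (fun j => 0 < load a j)%N
  (fun j => marginal_cost beta0 (scale j) (load a j)) (load_gt0 a i0).
exists (marginal_cost beta0 (scale js) (load a js)).
split => [j|k]; first exact: js_max.
have [->|k_new] := eqVneq k js => s_gt0.
  exact: (marginal_cost_le beta0_gt0 (scale_gt0 js) (leqnSn _) s_gt0).
have [i ai_js] := load_gt0P js_used; rewrite -ai_js in k_new *; exact: NE_marginal.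
Qed.

Theorem NE_optimal a' : (Csys h sigma2 gamma a <= Csys h sigma2 gamma a')%E.
Proof.
have [j overload|feas'] := pickP (fun j => slack beta0 (load a' j) <= 0).
  by rewrite (Csys_overload overload) leey.
have {}feas' j : 0 < slack beta0 (load a' j) by rewrite ltNge feas'.
have [lam [le_lam lam_le]] := NE_threshold.
rewrite (Csys_cell NE_feasible) (Csys_cell feas') lee_fin -subr_ge0 -sumrB.
apply: le_trans (_ : \sum_j ((load a' j)%:R - (load a j)%:R) * lam <= _).
  by rewrite -mulr_suml sumrB -!natr_sum !sum_load subrr mul0r.
apply: ler_sum => j _.
exact: (cell_cost_supporting_line beta0_gt0 (scale_gt0 j) (NE_feasible j) (feas' j)
  (le_lam j) (lam_le j)).
Qed.
End Equilibrium.
End SymmetricGame.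

Theorem proposition15 (R : realFieldType) (M N : nat)
  (h : 'I_M -> 'I_N -> R) (sigma2 : R) (gamma : 'I_M -> R)
  (hpos : forall i j, 0 < h i j) (sigma2pos : 0 < sigma2)
  (gammapos : forall i, 0 < gamma i)
  (feas : exists a0 : 'I_M -> 'I_N, feasible gamma a0)
  (h_indep : forall i k j, h i j = h k j)
  (gamma_const : forall i k, gamma i = gamma k)
  (a : 'I_M -> 'I_N) :
  is_NE h sigma2 gamma a ->
  forall a' : 'I_M -> 'I_N, (Csys h sigma2 gamma a <= Csys h sigma2 gamma a')%E.
Proof.
move=> a_NE a'; have [i0 _|no_user] := pickP (@predT 'I_M).
  exact: (NE_optimal i0 hpos sigma2pos gammapos h_indep gamma_const feas a_NE a').
by rewrite /Csys !big_pred0 // => i; have := no_user i.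
Qed.
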